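(* Let $M=\{1,\dots,m\}$ carry the measure $\mu$ with atoms of positive masses $\mu_1,\dots,\mu_m$, and $N=\{1,\dots,n\}$ the measure $\nu$ with atoms of positive masses $\nu_1,\dots,\nu_n$. For real $m\times n$ matrices $a$ set $$\|a\|=\max_{i\in M}\sum_{j\in N}|a(i,j)|\nu_j,\qquad \|a\|^{\top}=\max_{j\in N}\sum_{i\in M}|a(i,j)|\mu_i,\qquad \|a\|_{\ell^1}=\sum_{(i,j)\in M\times N}|a(i,j)|\mu_i\nu_j,$$ and for $t>0$ $$|||a|||_t=\sup_{E,F}\big(\mu(E)\vee t^{-1}\nu(F)\big)^{-1}\,\|1_{E\times F}\cdot a\|_{\ell^1},$$ the supremum over nonempty $E\subset M$, $F\subset N$. Let $K_t(a)=\inf\{\|b\|+t\|c\|^{\top}: a=b+c\}$. Let $t>0$. Then for any matrix $a$ with $|||a|||_t\le 1$ there is a splitting $M\times N=A\cup B$ with $A\cap B=\emptyset$ such that $$\|1_A\cdot a\|\le 1,\qquad \|1_B\cdot a\|^{\top}\le 1/t;$$ consequently $K_t(a)\le 2\,|||a|||_t$ for every matrix $a$.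
   Context: $1_S$ denotes the indicator function of a set $S\subset M\times N$, and $\cdot$ denotes entrywise (pointwise) multiplication of matrices: $(b\cdot c)(i,j)=b(i,j)c(i,j)$. $u\vee v=\max(u,v)$. *)

From mathcomp Require Import all_boot all_order all_algebra.
From mathcomp Require Import boolp classical_sets reals.
Set Implicit Arguments. Unset Strict Implicit. Unset Printing Implicit Defensive.
Import Order.TTheory GRing.Theory Num.Theory.
Local Open Scope ring_scope.

Section Defs.
Variables (R : realType) (m n : nat).

Definition mass k (w : 'I_k -> R) (E : {set 'I_k}) : R := \sum_(i in E) w i.

Definition rownorm (nu : 'I_n -> R) (a : 'M[R]_(m, n)) : R :=
  \big[Num.max/0]_(i < m) \sum_(j < n) `|a i j| * nu j.

Definition colnorm (mu : 'I_m -> R) (a : 'M[R]_(m, n)) : R :=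
  \big[Num.max/0]_(j < n) \sum_(i < m) `|a i j| * mu i.

Definition l1norm (mu : 'I_m -> R) (nu : 'I_n -> R) (a : 'M[R]_(m, n)) : R :=
  \sum_(i < m) \sum_(j < n) `|a i j| * mu i * nu j.

Definition restr (S : {set 'I_m * 'I_n}) (a : 'M[R]_(m, n)) : 'M[R]_(m, n) :=
  \matrix_(i, j) (if (i, j) \in S then a i j else 0).

(* |||a|||_t : sup over nonempty E, F (finite, hence a max; all terms >= 0) *)
Definition tnorm (mu : 'I_m -> R) (nu : 'I_n -> R) (t : R) (a : 'M[R]_(m, n)) : R :=
  \big[Num.max/0]_(E : {set 'I_m} | E != finset.set0)
    \big[Num.max/0]_(F : {set 'I_n} | F != finset.set0)
      ((Num.max (mass mu E) (t^-1 * mass nu F))^-1 * l1norm mu nu (restr (finset.setX E F) a)).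

Definition Kt (mu : 'I_m -> R) (nu : 'I_n -> R) (t : R) (a : 'M[R]_(m, n)) : R :=
  inf (fun x : R => exists b c : 'M[R]_(m, n),
         a = b + c /\ x = rownorm nu b + t * colnorm mu c).

End Defs.

From mathcomp Require Import all_boot all_order all_algebra.
From mathcomp Require Import boolp classical_sets reals.
Set Implicit Arguments. Unset Strict Implicit. Unset Printing Implicit Defensive.
Import Order.TTheory GRing.Theory Num.Theory.
Local Open Scope ring_scope.

(* Split the entries of a greedily, keeping a set E of live rows and F of live
   columns. A row of E whose mass over F is at most s goes entirely into A and
   is removed; otherwise a column of F whose mass over E is at most s/t goes
   entirely into B and is removed. If neither exists, summing the row masses
   gives ||1_{ExF} a||_1 > s mu(E) and summing the column masses gives
   ||1_{ExF} a||_1 > (s/t) nu(F), contradicting |||a|||_t <= s. With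
   s = |||a|||_t the split a = 1_A a + 1_B a witnesses K_t(a) <= 2 s. *)

Section GreedySplit.
Variables (R : realType) (m n : nat) (mu : 'I_m -> R) (nu : 'I_n -> R).
Hypotheses (mu_gt0 : forall i, 0 < mu i) (nu_gt0 : forall j, 0 < nu j).
Variables (a : 'M[R]_(m, n)) (r c : R).
Hypotheses (r_ge0 : 0 <= r) (c_ge0 : 0 <= c).

Definition block_l1 (E : {set 'I_m}) (F : {set 'I_n}) : R :=
  \sum_(i in E) \sum_(j in F) `|a i j| * mu i * nu j.

Definition row_mass (F : {set 'I_n}) (A : {set 'I_m * 'I_n}) (i : 'I_m) : R :=
  \sum_(j in F | (i, j) \in A) `|a i j| * nu j.

Definition col_mass (E : {set 'I_m}) (A : {set 'I_m * 'I_n}) (j : 'I_n) : R :=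
  \sum_(i in E | (i, j) \notin A) `|a i j| * mu i.

Definition splits_under (E : {set 'I_m}) (F : {set 'I_n})
    (A : {set 'I_m * 'I_n}) : Prop :=
  {in E, forall i, row_mass F A i <= r} /\ {in F, forall j, col_mass E A j <= c}.

Lemma splits_under_set0l (F : {set 'I_n}) :
  splits_under finset.set0 F finset.set0.
Proof.
split=> [i|j _]; first by rewrite inE.
by rewrite /col_mass big1 // => i; rewrite inE.
Qed.

Lemma splits_under_set0r (E : {set 'I_m}) :
  splits_under E finset.set0 finset.set0.
Proof.
split=> [i _|j]; last by rewrite inE.
by rewrite /row_mass big1 // => j; rewrite inE.
Qed.

Lemma splits_under_row (E : {set 'I_m}) (F : {set 'I_n}) A i :
  i \in E -> \sum_(j in F) `|a i j| * nu j <= r ->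
  splits_under (E :\ i) F A ->
  splits_under E F (A :|: finset.setX [set i] [set: 'I_n]).
Proof.
move=> Ei light [rowsA colsA]; split=> [i' Ei'|j Fj].
  have [->|ne] := eqVneq i' i.
    by rewrite /row_mass (eq_bigl (mem F)) // => j; rewrite !inE eqxx orbT andbT.
  rewrite /row_mass (eq_bigl (fun j => (j \in F) && ((i', j) \in A))).
    by apply: rowsA; rewrite !inE ne.
  by move=> j; rewrite !inE (negbTE ne) orbF.
rewrite /col_mass (eq_bigl (fun i' => (i' \in E :\ i) && ((i', j) \notin A))).
  exact: colsA.
by move=> i'; rewrite !inE andbT; case: (i' == i); rewrite ?orbT ?orbF ?andbF.
Qed.

Lemma splits_under_col (E : {set 'I_m}) (F : {set 'I_n}) A j :
  j \in F -> \sum_(i in E) `|a i j| * mu i <= c ->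
  splits_under E (F :\ j) A ->
  splits_under E F (A :\: finset.setX [set: 'I_m] [set j]).
Proof.
move=> Fj light [rowsA colsA]; split=> [i Ei|j' Fj'].
  rewrite /row_mass (eq_bigl (fun j' => (j' \in F :\ j) && ((i, j') \in A))).
    exact: rowsA.
  by move=> j'; rewrite !inE /=; case: (j' == j); rewrite ?andbF.
have [->|ne] := eqVneq j' j.
  by rewrite /col_mass (eq_bigl (mem E)) // => i; rewrite !inE eqxx /= andbT.
rewrite /col_mass (eq_bigl (fun i => (i \in E) && ((i, j') \notin A))).
  by apply: colsA; rewrite !inE ne.
by move=> i; rewrite !inE (negbTE ne).
Qed.

Lemma block_l1_gt_heavy (E : {set 'I_m}) (F : {set 'I_n}) :
  E != finset.set0 -> F != finset.set0 ->
  {in E, forall i, r < \sum_(j in F) `|a i j| * nu j} ->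
  {in F, forall j, c < \sum_(i in E) `|a i j| * mu i} ->
  Num.max (r * mass mu E) (c * mass nu F) < block_l1 E F.
Proof.
move=> /set0Pn[i0 Ei0] /set0Pn[j0 Fj0] heavy_rows heavy_cols.
rewrite gt_max; apply/andP; split; rewrite /mass mulr_sumr.
  rewrite /block_l1; apply: ltr_sum.
    by apply/hasP; exists i0; rewrite ?mem_index_enum.
  move=> i Ei; rewrite (eq_bigr (fun j => `|a i j| * nu j * mu i)).
    by rewrite -mulr_suml ltr_pM2r ?mu_gt0 ?heavy_rows.
  by move=> j _; rewrite mulrAC.
rewrite /block_l1 exchange_big /=; apply: ltr_sum.
  by apply/hasP; exists j0; rewrite ?mem_index_enum.
by move=> j Fj; rewrite -mulr_suml ltr_pM2r ?nu_gt0 ?heavy_cols.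
Qed.

Hypothesis block_l1_le : forall (E : {set 'I_m}) (F : {set 'I_n}),
  E != finset.set0 -> F != finset.set0 ->
  block_l1 E F <= Num.max (r * mass mu E) (c * mass nu F).

Lemma greedy_split (E : {set 'I_m}) (F : {set 'I_n}) : exists A, splits_under E F A.
Proof.
have [k] := ubnP (#|E| + #|F|); elim: k => // k IHk in E F *; rewrite ltnS => size_EF.
have [->|nE] := eqVneq E finset.set0.
  by exists finset.set0; apply: splits_under_set0l.
have [->|nF] := eqVneq F finset.set0.
  by exists finset.set0; apply: splits_under_set0r.
have [i /andP[Ei light]|heavy_rows] :=
  pickP (fun i => (i \in E) && (\sum_(j in F) `|a i j| * nu j <= r)).
  have [|A splitA] := IHk (E :\ i) F; first by rewrite (cardsD1 i E) Ei in size_EF.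
  by exists (A :|: finset.setX [set i] [set: 'I_n]); apply: splits_under_row.
have [j /andP[Fj light]|heavy_cols] :=
  pickP (fun j => (j \in F) && (\sum_(i in E) `|a i j| * mu i <= c)).
  have [|A splitA] := IHk E (F :\ j); first by rewrite (cardsD1 j F) Fj addnS in size_EF.
  by exists (A :\: finset.setX [set: 'I_m] [set j]); apply: splits_under_col.
suff : Num.max (r * mass mu E) (c * mass nu F) < block_l1 E F.
  by rewrite ltNge block_l1_le.
apply: block_l1_gt_heavy => // [i Ei|j Fj]; rewrite ltNge.
  by apply: contraFN (heavy_rows i) => light; rewrite /= Ei light.
by apply: contraFN (heavy_cols j) => light; rewrite /= Fj light.
Qed.

End GreedySplit.

Lemma mass_gt0 (R : realType) k (w : 'I_k -> R) (E : {set 'I_k}) :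
  (forall i, 0 < w i) -> E != finset.set0 -> 0 < mass w E.
Proof.
move=> w_gt0 /set0Pn[i Ei]; rewrite /mass (bigD1 i) //=.
by rewrite ltr_pwDl // ?w_gt0 // sumr_ge0 // => j _; rewrite ltW.
Qed.

Section TNormSplit.
Variables (R : realType) (m n : nat) (mu : 'I_m -> R) (nu : 'I_n -> R).
Hypotheses (mu_gt0 : forall i, 0 < mu i) (nu_gt0 : forall j, 0 < nu j).
Variables (t : R) (a : 'M[R]_(m, n)).
Hypothesis t_gt0 : 0 < t.

Lemma l1norm_restr_setX (E : {set 'I_m}) (F : {set 'I_n}) :
  l1norm mu nu (restr (finset.setX E F) a) = block_l1 mu nu a E F.
Proof.
rewrite /l1norm /block_l1 [RHS]big_mkcond; apply: eq_bigr => i _ /=.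
case: ifP => Ei; last by rewrite big1 // => j _; rewrite mxE inE /= Ei normr0 !mul0r.
rewrite [RHS]big_mkcond; apply: eq_bigr => j _.
by rewrite mxE inE /= Ei /=; case: (j \in F); rewrite ?normr0 ?mul0r.
Qed.

Lemma tnorm_ge0 : 0 <= tnorm mu nu t a.
Proof. exact: bigmax_ge_id. Qed.

Lemma block_l1_le_tnorm (E : {set 'I_m}) (F : {set 'I_n}) :
  E != finset.set0 -> F != finset.set0 ->
  block_l1 mu nu a E F <=
  Num.max (tnorm mu nu t a * mass mu E) (tnorm mu nu t a / t * mass nu F).
Proof.
move=> nE nF; have max_gt0 : 0 < Num.max (mass mu E) (t^-1 * mass nu F).
  by rewrite lt_max mass_gt0.
rewrite -mulrA -maxr_pMr ?tnorm_ge0 // -l1norm_restr_setX -ler_pdivrMr //.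
by rewrite mulrC; apply: (bigmax_sup E) => //; apply: (bigmax_sup F).
Qed.

Lemma row_mass_restr (A : {set 'I_m * 'I_n}) i :
  \sum_(j < n) `|restr A a i j| * nu j = row_mass nu a [set: 'I_n] A i.
Proof.
rewrite /row_mass [RHS]big_mkcond; apply: eq_bigr => j _.
by rewrite mxE !inE; case: ifP; rewrite ?normr0 ?mul0r.
Qed.

Lemma col_mass_restrC (A : {set 'I_m * 'I_n}) j :
  \sum_(i < m) `|restr (~: A) a i j| * mu i = col_mass mu a [set: 'I_m] A j.
Proof.
rewrite /col_mass [RHS]big_mkcond; apply: eq_bigr => i _.
by rewrite mxE !inE; case: ifP; rewrite ?normr0 ?mul0r.
Qed.

Lemma rownorm_restr_le (A : {set 'I_m * 'I_n}) (s : R) : 0 <= s ->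
  {in [set: 'I_m], forall i, row_mass nu a [set: 'I_n] A i <= s} ->
  rownorm nu (restr A a) <= s.
Proof.
move=> s_ge0 rowsA; apply: bigmax_le => // i _.
by rewrite row_mass_restr rowsA ?inE.
Qed.

Lemma colnorm_restrC_le (A : {set 'I_m * 'I_n}) (s : R) : 0 <= s ->
  {in [set: 'I_n], forall j, col_mass mu a [set: 'I_m] A j <= s} ->
  colnorm mu (restr (~: A) a) <= s.
Proof.
move=> s_ge0 colsA; apply: bigmax_le => // j _.
by rewrite col_mass_restrC colsA ?inE.
Qed.

Lemma tnorm_split : exists A,
  rownorm nu (restr A a) <= tnorm mu nu t a /\
  colnorm mu (restr (~: A) a) <= tnorm mu nu t a / t.
Proof.
have s_ge0 := tnorm_ge0; have st_ge0 : 0 <= tnorm mu nu t a / t.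
  by rewrite divr_ge0 // ltW.
have [A [rowsA colsA]] := greedy_split mu_gt0 nu_gt0 s_ge0 st_ge0
  block_l1_le_tnorm [set: 'I_m] [set: 'I_n].
by exists A; split; [apply: rownorm_restr_le | apply: colnorm_restrC_le].
Qed.

End TNormSplit.

Lemma add_restr_setC (R : realType) m n (A : {set 'I_m * 'I_n}) (a : 'M[R]_(m, n)) :
  restr A a + restr (~: A) a = a.
Proof.
by apply/matrixP => i j; rewrite !mxE !inE; case: ifP; rewrite ?addr0 ?add0r.
Qed.

Lemma Kt_le (R : realType) m n (mu : 'I_m -> R) (nu : 'I_n -> R) (t : R)
    (a b c : 'M[R]_(m, n)) :
  0 <= t -> a = b + c -> Kt mu nu t a <= rownorm nu b + t * colnorm mu c.
Proof.
move=> t_ge0 abc; apply: ge_inf; last by exists b, c.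
exists 0 => _ [b' [c' [_ ->]]].
by rewrite addr_ge0 ?mulr_ge0 //; apply: bigmax_ge_id.
Qed.

Theorem proposition1p1 (R : realType) (m n : nat)
  (mu : 'I_m -> R) (nu : 'I_n -> R)
  (hmu : forall i, 0 < mu i) (hnu : forall j, 0 < nu j)
  (t : R) (ht : 0 < t) :
  (forall a : 'M[R]_(m, n), tnorm mu nu t a <= 1 ->
     exists A B : {set 'I_m * 'I_n},
       [/\ A :|: B = [set: 'I_m * 'I_n], A :&: B = finset.set0,
           rownorm nu (restr A a) <= 1 &
           colnorm mu (restr B a) <= t^-1])
  /\ (forall a : 'M[R]_(m, n), Kt mu nu t a <= 2 * tnorm mu nu t a).
Proof.
split=> a.
  move=> tnorm_le1; have [A [rowA colA]] := tnorm_split hmu hnu a ht.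
  exists A, (~: A); split; [exact: finset.setUCr | exact: finset.setICr | |].
    exact: le_trans tnorm_le1.
  by apply: le_trans colA _; rewrite ler_pdivrMr // mulVf ?gt_eqF.
have [A [rowA colA]] := tnorm_split hmu hnu a ht.
apply: le_trans (Kt_le mu nu (ltW ht) (esym (add_restr_setC A a))) _.
rewrite mulr2n mulrDl mul1r lerD //; apply: le_trans (ler_wpM2l (ltW ht) colA) _.
by rewrite mulrCA mulfV ?gt_eqF // mulr1.
Qed.
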